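(* For every $n\ge 4$, the vertex of $\mathrm{PYR}(n)$ corresponding to the pyramidal tour with code $\langle 1,1,\dots,1\rangle$ and the vertex corresponding to the pyramidal tour with code $\langle 0,0,\dots,0\rangle$ are each adjacent to every other vertex of $\mathrm{PYR}(n)$.
   Context: Let $K_n$ be the complete undirected graph on vertex set $\{1,\dots,n\}$ with edge set $E$. A Hamiltonian cycle $\langle 1,i_1,\dots,i_r,n,j_1,\dots,j_{n-r-2}\rangle$ is called a pyramidal tour if $i_1<i_2<\dots<i_r$ and $j_1>j_2>\dots>j_{n-r-2}$; tours are undirected. Let $PT_n$ be the set of all pyramidal tours. For $x\in PT_n$ its characteristic vector $x^v\in\mathbb{R}^E$ has $x^v_e=1$ if edge $e$ lies in $x$ and $0$ otherwise. The pyramidal tours polytope is $\mathrm{PYR}(n)=\operatorname{conv}\{x^v : x\in PT_n\}$. Every pyramidal tour contains the edge $\{1,2\}$; the tour is oriented so that vertex $2$ belongs to the increasing part. The code of $x$ is the $0/1$ vector $x^c=(x^c_3,\dots,x^c_{n-1})$ with $x^c_i=1$ if vertex $i$ is visited in the increasing part of $x$ and $x^c_i=0$ otherwise; $x\mapsto x^c$ is a bijection from $PT_n$ onto $\{0,1\}^{n-3}$. Two vertices are adjacent if the segment joining them is a one-dimensional face of the polytope. *)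

From HB Require Import structures.
From mathcomp Require Import all_boot all_order all_algebra.
Set Implicit Arguments. Unset Strict Implicit. Unset Printing Implicit Defensive.
Import Order.TTheory GRing.Theory Num.Theory.

(* Vertices of K_n are the naturals 1..n.
   Edge set E of K_n: pairs (i,j) with 1 <= i < j <= n, representing {i,j}. *)
Definition edge (n : nat) : finType :=
  {p : 'I_n.+1 * 'I_n.+1 | (0 < val p.1) && (val p.1 < val p.2)}.

Definition pyr_seq (n : nat) (a b : seq nat) : seq nat := 1 :: a ++ n :: b.

Definition is_pyramidal (n : nat) (a b : seq nat) : Prop :=
  [/\ sorted ltn a, sorted (fun x y => y < x) b &
      perm_eq (pyr_seq n a b) (iota 1 n)].

Definition PT (n : nat) (s : seq nat) : Prop :=
  exists a b, s = pyr_seq n a b /\ is_pyramidal n a b.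

Definition cyc_pairs (s : seq nat) : seq (nat * nat) := zip s (rot 1 s).

Definition edge_in (n : nat) (s : seq nat) (e : edge n) : bool :=
  has (fun uv : nat * nat =>
         ((uv.1 == val (val e).1) && (uv.2 == val (val e).2)) ||
         ((uv.1 == val (val e).2) && (uv.2 == val (val e).1)))
      (cyc_pairs s).

Definition charvec (R : realFieldType) (n : nat) (s : seq nat)
  : {ffun edge n -> R} := [ffun e => if edge_in s e then 1%R else 0%R].

Definition dotE (R : realFieldType) (n : nat) (c x : {ffun edge n -> R}) : R :=
  (\sum_(e : edge n) c e * x e)%R.

(* The vertex set generating PYR(n) = conv {x^v : x in PT_n}. *)
Definition PYRgen (R : realFieldType) (n : nat) (x : {ffun edge n -> R}) : Prop :=
  exists s, PT n s /\ x = charvec R n s.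

(* Adjacency in conv(V): the segment [p,q] (p <> q, p,q in V) is a
   one-dimensional face of conv(V).  Faces of a polytope are exposed, and the
   exposed face of conv(V) for the objective c is conv{r in V | c.r = max}; so
   [p,q] is a face iff some c is maximised over V at p and q and every maximiser
   r in V lies on the segment [p,q]. *)
Definition adjacent (R : realFieldType) (n : nat)
  (V : {ffun edge n -> R} -> Prop) (p q : {ffun edge n -> R}) : Prop :=
  [/\ V p, V q, p <> q &
   exists c : {ffun edge n -> R},
     [/\ dotE c p = dotE c q,
         (forall r, V r -> (dotE c r <= dotE c p)%R) &
         (forall r, V r -> dotE c r = dotE c p ->
            exists t : R, [/\ (0 <= t)%R, (t <= 1)%R &
              r = [ffun e => (1 - t) * p e + t * q e]%R])]].

(* Oriented pyramidal tour <1,a,n,b> with vertex 2 in the increasing part;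
   its code is (x_3,...,x_{n-1}) with x_i = (i \in a). *)
Definition code_all (n : nat) (a : seq nat) (bit : bool) : Prop :=
  forall i, 3 <= i <= n.-1 -> (i \in a) = bit.

Arguments charvec R n s : clear implicits.
Arguments PYRgen R n x : clear implicits.
Arguments adjacent R n V p q : clear implicits.

From HB Require Import structures.
From mathcomp Require Import all_boot all_order all_algebra.
From mathcomp Require Import zify.
Set Implicit Arguments. Unset Strict Implicit. Unset Printing Implicit Defensive.
Import Order.TTheory GRing.Theory Num.Theory.

(* A pyramidal tour is determined by the set L of inner vertices on its
   increasing side, normalised so that 2 \in L: its edges are the steps of the
   two increasing paths 1 -> L -> n and 1 -> (other side of L) -> n, and there
   are always exactly n of them.  Let P be the tour with code 1...1 or 0...0
   and Y any other tour.  The objective counting the edges lying in P or in Y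
   is at most n on every tour, with equality exactly for the tours whose edges
   all lie in P or Y.  If Z is such a tour and Z <> P, induction on k shows that
   Z agrees with Y at every vertex k: the edge of Z jumping over k (on the side
   of Z avoiding k) is not an edge of P -- the only edges of P jumping over a
   vertex 2 < k < n are {1, n} (code 1...1) and {2, n} (code 0...0), and either
   would force Z = P -- so it is an edge of Y, and that forces agreement at k
   given agreement below k.  Hence the face of this objective is [P, Y]. *)

(** * Chains and tours of a side set *)

Definition inner (n : nat) (L : pred nat) : Prop := forall k, L k -> 1 < k < n.

Definition chain_edge (n : nat) (L : pred nat) (i j : nat) : bool :=
  [&& (i == 1) || L i, (j == n) || L j & ~~ has L (index_iota i.+1 j)].

Definition other_side (n : nat) (L : pred nat) : pred nat :=
  fun k => (1 < k < n) && ~~ L k.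

Definition tour_edge (n : nat) (L : pred nat) (i j : nat) : bool :=
  chain_edge n L i j || chain_edge n (other_side n L) i j.

Lemma chain_edgeP n L i j :
  reflect [/\ (i == 1) || L i, (j == n) || L j & forall m, i < m < j -> ~~ L m]
          (chain_edge n L i j).
Proof.
apply: (iffP and3P) => -[hi hj hL]; split=> //.
  by move=> m hm; apply: (hasPn hL); rewrite mem_index_iota.
by apply/hasPn => m; rewrite mem_index_iota => hm; apply: hL.
Qed.

Lemma eq_chain_edge n L L' : L =1 L' -> chain_edge n L =2 chain_edge n L'.
Proof. by move=> eqL i j; rewrite /chain_edge !eqL (eq_has eqL). Qed.

Lemma eq_tour_edge n L L' : L =1 L' -> tour_edge n L =2 tour_edge n L'.
Proof.
move=> eqL i j; rewrite /tour_edge (eq_chain_edge _ eqL); congr orb.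
by apply: eq_chain_edge => k; rewrite /other_side eqL.
Qed.

Lemma other_sideK n L : inner n L -> other_side n (other_side n L) =1 L.
Proof.
move=> innerL k; rewrite /other_side negb_and negbK.
by case Lk: (L k); [rewrite innerL | rewrite orbF andbN].
Qed.

Lemma tour_edge_other n L : inner n L -> tour_edge n (other_side n L) =2 tour_edge n L.
Proof.
by move=> innerL i j; rewrite /tour_edge orbC (eq_chain_edge _ (other_sideK innerL)).
Qed.

Lemma inner_eq n L L' : inner n L -> inner n L' -> L 2 -> L' 2 ->
  (forall m, 2 < m < n -> L m = L' m) -> L =1 L'.
Proof.
move=> innerL innerL' L2 L'2 eqLL' m.
have [m2|m2] := eqVneq m 2; first by rewrite m2 L2 L'2.
case: (boolP (2 < m < n)) => [/eqLL' //|hm].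
by case Lm: (L m); case L'm: (L' m) => //; [have := innerL m Lm | have := innerL' m L'm]; lia.
Qed.

Lemma chain_prev (L : pred nat) k : 1 < k ->
  exists u, [/\ 0 < u < k, (u == 1) || L u & forall m, u < m < k -> ~~ L m].
Proof.
move=> k1; pose Q u := (0 < u < k) && ((u == 1) || L u).
have exQ : exists u, Q u by exists 1; rewrite /Q k1.
have boundQ : forall u, Q u -> u <= k by move=> u /andP[/andP[_ /ltnW]].
case: (ex_maxnP exQ boundQ) => u /andP[hu Lu] umax; exists u; split=> //.
move=> m hm; apply/negP => Lm.
by have := umax m; rewrite /Q Lm orbT andbT; lia.
Qed.

Lemma chain_next n (L : pred nat) k : k < n ->
  exists w, [/\ k < w <= n, (w == n) || L w & forall m, k < m < w -> ~~ L m].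
Proof.
move=> kn; pose Q w := (k < w <= n) && ((w == n) || L w).
have exQ : exists w, Q w by exists n; rewrite /Q kn eqxx leqnn.
case: (ex_minnP exQ) => w /andP[hw Lw] wmin; exists w; split=> //.
move=> m hm; apply/negP => Lm.
by have := wmin m; rewrite /Q Lm orbT andbT; lia.
Qed.

Lemma chain_edge_across n L k : 1 < k < n -> ~~ L k ->
  exists u w, [/\ 0 < u < k, k < w <= n & chain_edge n L u w].
Proof.
case/andP=> k1 kn nLk.
have [u [hu Lu ubetw]] := chain_prev L k1.
have [w [hw Lw wbetw]] := chain_next L kn.
exists u, w; split=> //; apply/chain_edgeP; split=> // m hm.
by case: (ltngtP m k) => [mk|km|->] //; [apply: ubetw | apply: wbetw]; lia.
Qed.

Lemma chain_edge_to n L j : 1 < j <= n -> (j == n) || L j ->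
  exists2 i, 0 < i < j & chain_edge n L i j.
Proof.
case/andP=> j1 _ Lj; have [i [hi Li ibetw]] := chain_prev L j1.
by exists i => //; apply/chain_edgeP.
Qed.

Lemma chain_edge_from n L i : i < n -> (i == 1) || L i ->
  exists2 j, i < j <= n & chain_edge n L i j.
Proof.
move=> iN Li; have [j [hj Lj jbetw]] := chain_next L iN.
by exists j => //; apply/chain_edgeP.
Qed.

Lemma chain_edge_inj_l n L j i i' : 0 < i < j -> 0 < i' < j ->
  chain_edge n L i j -> chain_edge n L i' j -> i = i'.
Proof.
wlog ii' : i i' / i <= i' => [hwlog|hi hi' /chain_edgeP[_ _ betw] /chain_edgeP[Li' _ _]].
  by case/orP: (leq_total i i') => ? *; [|symmetry]; apply: hwlog.
apply/eqP; rewrite eqn_leq ii' leqNgt; apply/negP => lti.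
have i'1 : (i' == 1) = false by apply/eqP; lia.
by move: Li'; rewrite i'1 /= => Li'; have /negP := betw i' ltac:(lia).
Qed.

Lemma chain_edge_inj_r n L i j j' : i < j <= n -> i < j' <= n ->
  chain_edge n L i j -> chain_edge n L i j' -> j = j'.
Proof.
wlog jj' : j j' / j <= j' => [hwlog|hj hj' /chain_edgeP[_ Lj _] /chain_edgeP[_ _ betw]].
  by case/orP: (leq_total j j') => ? *; [|symmetry]; apply: hwlog.
apply/eqP; rewrite eqn_leq jj' leqNgt; apply/negP => ltj.
have jn : (j == n) = false by apply/eqP; lia.
by move: Lj; rewrite jn /= => Lj; have /negP := betw j ltac:(lia).
Qed.

Lemma chain_edge_1n_other n L : 2 < n ->
  chain_edge n L 1 n -> ~~ chain_edge n (other_side n L) 1 n.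
Proof.
move=> n2 /chain_edgeP[_ _ betwL]; apply/negP => /chain_edgeP[_ _ betwO].
have := betwO 2 ltac:(lia).
by rewrite /other_side (negbTE (betwL 2 ltac:(lia))) andbT; lia.
Qed.

(** * The n edges of a tour *)

Definition e1 n (e : edge n) : nat := val (val e).1.
Definition e2 n (e : edge n) : nat := val (val e).2.

Lemma edge_bounds n (e : edge n) : 0 < e1 e < e2 e /\ e2 e <= n.
Proof.
case: e => -[x y] /= p; have /andP[x0 xy] := p; rewrite /e1 /e2 /= x0 xy.
by have := ltn_ord y; rewrite ltnS.
Qed.

Lemma edge_inj n (e e' : edge n) : e1 e = e1 e' -> e2 e = e2 e' -> e = e'.
Proof.
move=> /val_inj h1 /val_inj h2; apply: val_inj.
by case: (val e) (val e') h1 h2 => x y [x' y'] /= -> ->.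
Qed.

Lemma edge_of n i j : 0 < i < j -> j <= n -> exists e : edge n, e1 e = i /\ e2 e = j.
Proof.
move=> hij jn; have iN : i < n.+1 by lia.
have jN : j < n.+1 by lia.
by exists (exist _ (Ordinal iN, Ordinal jN) hij).
Qed.

Definition tour n L : {set edge n} := [set e | tour_edge n L (e1 e) (e2 e)].

Lemma eq_tour n L L' : L =1 L' -> tour n L = tour n L'.
Proof. by move=> eqL; apply/setP => e; rewrite !inE (eq_tour_edge _ eqL). Qed.

Lemma tour_other n L : inner n L -> tour n (other_side n L) = tour n L.
Proof. by move=> innerL; apply/setP => e; rewrite !inE tour_edge_other. Qed.

Lemma chain_edge_top_bottom n L i v j : 0 < i < v -> v < j <= n ->
  chain_edge n L i v -> chain_edge n (other_side n L) v j -> False.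
Proof.
move=> hi hj /chain_edgeP[_ Lv _] /chain_edgeP[Ov _ _].
by move: Lv Ov; rewrite /other_side; case: (L v); rewrite ?andbF ?orbF; lia.
Qed.

(* Label each edge of the tour by its upper end on the chain of [L] and by its
   lower end on the complementary chain: every vertex 1..n gets exactly one label. *)
Definition tour_label n L (e : edge n) : 'I_n.+1 :=
  if chain_edge n L (e1 e) (e2 e) then (val e).2 else (val e).1.

Lemma val_tour_label n L (e : edge n) :
  val (tour_label L e) = if chain_edge n L (e1 e) (e2 e) then e2 e else e1 e.
Proof. by rewrite /tour_label; case: ifP. Qed.

Lemma tour_label_inj n L : {in tour n L &, injective (@tour_label n L)}.
Proof.
move=> x y; rewrite !inE /tour_edge => Tx Ty /(congr1 val); rewrite !val_tour_label.
have [ltx nx] := edge_bounds x; have [lty ny] := edge_bounds y.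
move: Tx Ty; case Lx: (chain_edge n L _ _); case Ly: (chain_edge n L _ _) => //= Ox Oy exy.
- by apply: edge_inj => //; rewrite exy in Lx ltx; apply: (chain_edge_inj_l _ _ Lx Ly).
- by rewrite exy in Lx; exfalso; apply: (chain_edge_top_bottom _ _ Lx Oy); lia.
- by rewrite -exy in Ly; exfalso; apply: (chain_edge_top_bottom _ _ Ly Ox); lia.
by apply: edge_inj => //; rewrite exy in Ox ltx; apply: (chain_edge_inj_r _ _ Ox Oy); lia.
Qed.

Lemma tour_label_onto n L : 2 < n -> inner n L -> tour_label L @: tour n L = [set~ ord0].
Proof.
move=> n2 innerL; apply/setP => v; rewrite !inE; apply/imsetP/idP => [[e _ ->]|].
  by rewrite -val_eqE val_tour_label /=; have := edge_bounds e; case: ifP; lia.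
case: v => v vN; rewrite -val_eqE /= -lt0n => v0; have vn : v <= n by rewrite -ltnS.
case Lv: ((v == n) || L v).
  have v1 : 1 < v by case/orP: Lv => [/eqP ->|/innerL]; lia.
  have [i hi Liv] := chain_edge_to (n := n) (j := v) ltac:(lia) Lv.
  have [e [ei ev]] := edge_of hi vn.
  exists e; first by rewrite inE /tour_edge ei ev Liv.
  by apply: val_inj; rewrite val_tour_label ei ev Liv.
have vO : (v == 1) || other_side n L v.
  by move: Lv; rewrite /other_side; case: (L v) => /=; lia.
have [w hw Ovw] := chain_edge_from (n := n) (i := v) ltac:(lia) vO.
have [e [ev ew]] := edge_of (n := n) (i := v) (j := w) ltac:(lia) ltac:(lia).
exists e; first by rewrite inE /tour_edge ev ew Ovw orbT.
apply: val_inj; rewrite val_tour_label ev ew; case: ifP => // Lvw.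
case/chain_edgeP: (Lvw) => Lv' Lw _; case/chain_edgeP: (Ovw) => _ Ow _.
have v1 : v = 1 by move: Lv Lv'; case: (L v) => /=; lia.
have wn : w = n by move: Lw Ow; rewrite /other_side; case: (L w) => /=; lia.
by rewrite v1 wn in Lvw Ovw; move: (chain_edge_1n_other n2 Lvw); rewrite Ovw.
Qed.

Lemma card_tour n L : 2 < n -> inner n L -> #|tour n L| = n.
Proof.
move=> n2 innerL; rewrite -(card_in_imset (@tour_label_inj n L)).
by rewrite tour_label_onto // cardsC1 card_ord.
Qed.

(** * Pyramidal tours as vertex sequences *)

Lemma mem_zip_sorted (s : seq nat) i j : sorted ltn s -> i < j ->
  ((i, j) \in zip s (behead s)) = [&& i \in s, j \in s & ~~ has (fun m => i < m < j) s].
Proof.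
move=> + ij; elim: s => [|x [|y t] IH] //=.
  by move=> _; rewrite !inE; apply/esym/and3P => -[/eqP ix /eqP jx _]; rewrite ix jx ltnn in ij.
case/andP=> xy pyt; have /allP yt := order_path_min ltn_trans pyt.
have yt_ge m : m \in y :: t -> y <= m by rewrite inE => /orP[/eqP ->|/yt /ltnW].
rewrite in_cons IH // xpair_eqE !(in_cons x) /=.
have [xi|ix] := eqVneq i x; last first.
  case: (boolP (i \in y :: t)) => //= /yt_ge iy.
  have -> : (j == x) = false by apply/eqP; lia.
  by have -> : (i < x) = false by lia.
subst x; have -> : i \in y :: t = false by apply/negP => /yt_ge; lia.
rewrite /= orbF ltnn /=; case: (ltngtP j y) => [jy|yj|->].
- have -> : (j == i) = false by apply/eqP; lia.
  by have -> : j \in y :: t = false by apply/negP => /yt_ge; lia.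
- by rewrite xy /= andbF.
by rewrite mem_head orbT andbF /=; apply/esym/hasPn => m /yt; lia.
Qed.

Lemma mem_zip_sorted_lt (s : seq nat) x y :
  sorted ltn s -> (x, y) \in zip s (behead s) -> x < y.
Proof.
elim: s => [|u [|v t] IH] //= /andP[uv pvt].
by rewrite in_cons => /orP[/eqP[-> ->] //|]; apply: IH.
Qed.

Lemma mem_zip_rev (T : eqType) (s t : seq T) x y : size s = size t ->
  ((x, y) \in zip s t) = ((y, x) \in zip (rev t) (rev s)).
Proof.
move=> st; rewrite -rev_zip ?mem_rev //.
by elim: s t st => [|u s IH] [|v t] //= [/IH st]; rewrite !in_cons st !xpair_eqE andbC.
Qed.

Lemma zip_cons_rcons (T : Type) (x y : T) s :
  zip (x :: s) (rcons s y) = zip (x :: rcons s y) (rcons s y).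
Proof. by elim: s x => //= u s IH x; rewrite IH. Qed.

Lemma sorted_chain n c : 1 < n -> sorted ltn c -> inner n (mem c) ->
  sorted ltn (1 :: rcons c n).
Proof.
move=> n1 sc innerc; rewrite /= rcons_path (path_sortedE ltn_trans) sc andbT.
apply/andP; split=> /=; first by apply/allP => k /innerc; lia.
by have := mem_last 1 c; rewrite inE => /orP[/eqP ->|/innerc /andP[]].
Qed.

Lemma mem_zip_chain n c i j : sorted ltn c -> inner n (mem c) -> 0 < i < j -> j <= n ->
  ((i, j) \in zip (1 :: rcons c n) (rcons c n)) = chain_edge n (mem c) i j.
Proof.
move=> sc innerc ij jn; have sorted1c := sorted_chain (n := n) ltac:(lia) sc innerc.
rewrite (mem_zip_sorted sorted1c) /chain_edge; last lia.
rewrite !(inE, mem_rcons) /= has_rcons.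
have -> : (i == n) = false by apply/eqP; lia.
have -> : (j == 1) = false by apply/eqP; lia.
have -> : (i < 1 < j) = false by lia.
have -> : (i < n < j) = false by lia.
rewrite /= has_sym; congr [&& _, _ & ~~ _]; apply: eq_has => m.
by rewrite mem_index_iota.
Qed.

Lemma pyramidal_sides n a b : is_pyramidal n a b ->
  inner n (mem a) /\ forall k, (k \in b) = other_side n (mem a) k.
Proof.
case=> _ _ /permP count_eq.
have memE (k : nat) (s : seq nat) : (k \in s) = (0 < count_mem k s) by rewrite -has_pred1 has_count.
have cnt (k : nat) : (k == 1) + count_mem k a + ((k == n) + count_mem k b) = (0 < k <= n).
  have := count_eq (pred1 k); rewrite /pyr_seq /= count_cat /=.
  by rewrite [count_mem k (iota 1 n)]count_uniq_mem ?iota_uniq // mem_iota; lia.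
split=> k; rewrite /other_side /= !memE; have := cnt k; lia.
Qed.

Lemma edge_inE n s (e : edge n) :
  edge_in s e = ((e1 e, e2 e) \in cyc_pairs s) || ((e2 e, e1 e) \in cyc_pairs s).
Proof.
rewrite /edge_in -!has_pred1 -has_predU; apply: eq_has => -[u v].
by rewrite /= !xpair_eqE.
Qed.

Lemma cyc_pairs_pyr n a b : cyc_pairs (pyr_seq n a b) =
  zip (1 :: rcons a n) (rcons a n) ++ zip (n :: b) (rcons b 1).
Proof.
rewrite /cyc_pairs /pyr_seq rot1_cons -zip_cons_rcons -zip_cat ?size_rcons //.
by rewrite rcons_cat cat_rcons.
Qed.

Lemma edge_in_pyr n a b (e : edge n) : is_pyramidal n a b ->
  edge_in (pyr_seq n a b) e = tour_edge n (mem a) (e1 e) (e2 e).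
Proof.
move=> pyr; have [innera memb] := pyramidal_sides pyr; case: pyr => sa sb _.
have [ij jn] := edge_bounds e.
have srb : sorted ltn (rev b) by rewrite rev_sorted.
have innerb : inner n (mem (rev b)) by move=> k; rewrite /= mem_rev memb => /andP[].
have no_descending_step c : sorted ltn c -> inner n (mem c) ->
    ((e2 e, e1 e) \in zip (1 :: rcons c n) (rcons c n)) = false.
  move=> sc innerc; apply/negP => /(mem_zip_sorted_lt (sorted_chain _ sc innerc)); lia.
have mem_zip_back u v : ((u, v) \in zip (n :: b) (rcons b 1)) =
    ((v, u) \in zip (1 :: rcons (rev b) n) (rcons (rev b) n)).
  by rewrite mem_zip_rev ?size_rcons // rev_rcons rev_cons zip_cons_rcons.
rewrite edge_inE cyc_pairs_pyr !mem_cat !mem_zip_back !no_descending_step // orbF orFb.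
rewrite !mem_zip_chain // /tour_edge; congr orb; apply: eq_chain_edge => k.
by rewrite /= mem_rev memb.
Qed.

(** * Tours inside the union of two tours *)

Definition side_without n (L : pred nat) k : pred nat := if L k then other_side n L else L.

Lemma side_withoutN n L k : ~~ side_without n L k k.
Proof. by rewrite /side_without /other_side; case Lk: (L k); rewrite ?Lk ?andbF. Qed.

Lemma side_without_tour_edge n L k u w :
  chain_edge n (side_without n L k) u w -> tour_edge n L u w.
Proof. by rewrite /side_without /tour_edge; case: (L k) => ->; rewrite ?orbT. Qed.

Lemma tour_edge_across_agree n (Z Y : pred nat) k u w :
  inner n Z -> Z 2 -> Y 2 -> 2 < k < n -> (forall m, 1 < m < k -> Z m = Y m) ->
  u < k < w -> chain_edge n (side_without n Z k) u w -> tour_edge n Y u w -> Z k = Y k.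
Proof.
move=> innerZ Z2 Y2 hk agree huw; rewrite /side_without /tour_edge.
case Zk: (Z k) => /chain_edgeP[Su _ Sbetw] /orP[] /chain_edgeP[Yu _ Ybetw].
- have [u1|u1] := eqVneq u 1; first by subst u; move: (Ybetw 2); rewrite Y2 => /(_ ltac:(lia)).
  move: Su Yu; rewrite (negbTE u1) /other_side /= => /andP[hu nZu] Yu.
  have Zu : Z u by rewrite agree //; lia.
  by rewrite Zu in nZu.
- have := Ybetw k ltac:(lia); rewrite /other_side negb_and negbK => /orP[|->] //; lia.
- have [u1|u1] := eqVneq u 1; first by subst u; move: (Sbetw 2); rewrite Z2 => /(_ ltac:(lia)).
  have Zu : Z u by move: Su; rewrite (negbTE u1).
  by have := Ybetw k ltac:(lia); case: (Y k).
have [u1|u1] := eqVneq u 1; first by subst u; move: (Sbetw 2); rewrite Z2 => /(_ ltac:(lia)).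
move: Su Yu; rewrite (negbTE u1) /other_side /= => Zu /andP[_ nYu].
have Yu : Y u by rewrite -agree //; have := innerZ u Zu; lia.
by rewrite Yu in nYu.
Qed.

Lemma side_without_code n (Z : pred nat) k (bit : bool) : Z 2 ->
  chain_edge n (side_without n Z k) (if bit then 1 else 2) n ->
  forall m, 2 < m < n -> Z m = bit.
Proof.
move=> Z2; rewrite /side_without /other_side.
case: bit; case Zk: (Z k) => /chain_edgeP[Su _ betw] m hm.
- by have := betw m ltac:(lia); rewrite negb_and negbK => /orP[|->] //; lia.
- by move: (betw 2); rewrite Z2 => /(_ ltac:(lia)).
- by move: Su; rewrite Z2 andbF.
by apply/negbTE/betw; lia.
Qed.

Section ConstantCode.
Variables (n : nat) (P : pred nat) (bit : bool).
Hypotheses (innerP : inner n P) (P2 : P 2) (P_code : forall m, 2 < m < n -> P m = bit).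

Lemma tour_edge_across_const k u w : 2 < k < n -> u < k < w -> tour_edge n P u w ->
  u = (if bit then 1 else 2) /\ w = n.
Proof.
move=> hk huw; case: bit P_code => Pc; case/orP=> /chain_edgeP[Su Sw betw].
- by move: (betw k ltac:(lia)); rewrite Pc.
- have noO m : other_side n P m = false.
    rewrite /other_side; case: (boolP (1 < m < n)) => //= hm.
    by have [->|m2] := eqVneq m 2; [rewrite P2 | rewrite Pc //; lia].
  by move: Su Sw; rewrite !noO !orbF => /eqP -> /eqP ->.
- have P_eq2 m : P m -> m = 2.
    move=> Pm; have hm := innerP Pm; apply/eqP; apply: contraTT Pm => m2.
    by rewrite Pc //; lia.
  have [u1|u1] := eqVneq u 1; first by subst u; move: (betw 2); rewrite P2 => /(_ ltac:(lia)).
  move: Su; rewrite (negbTE u1) /= => /P_eq2 ->; split=> //.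
  by case/orP: Sw => [/eqP //|/P_eq2]; lia.
by move: (betw k ltac:(lia)); rewrite /other_side Pc //; lia.
Qed.

Lemma tour_in_union_constant_code (Y Z : pred nat) :
  inner n Y -> inner n Z -> Y 2 -> Z 2 -> tour n Z \subset tour n P :|: tour n Y ->
  Z =1 P \/ Z =1 Y.
Proof.
move=> innerY innerZ Y2 Z2 /subsetP ZPY.
have Zsub u w : 0 < u < w -> w <= n ->
    tour_edge n Z u w -> tour_edge n P u w || tour_edge n Y u w.
  move=> uw wn; have [e [<- <-]] := edge_of uw wn.
  by move=> Ze; have := ZPY e; rewrite !inE; apply.
case: (boolP (all (fun m => Z m == P m) (index_iota 3 n))) => [/allP ZP|/allPn[k0 hk0 ZPk0]].
  by left; apply: (@inner_eq n) => // m hm; apply/eqP/ZP; rewrite mem_index_iota.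
right; suff agree k : 1 < k < n -> Z k = Y k.
  by apply: (@inner_eq n) => // m hm; apply: agree; lia.
elim/ltn_ind: k => k IH hk; have [->|k2] := eqVneq k 2; first by rewrite Z2 Y2.
have hk' : 2 < k < n by lia.
have [u [w [hu hw Suw]]] := chain_edge_across hk (side_withoutN n Z k).
case/orP: (Zsub u w ltac:(lia) ltac:(lia) (side_without_tour_edge Suw)) => [Puw|Yuw].
  have [eu ew] := tour_edge_across_const hk' (ltac:(lia) : u < k < w) Puw.
  rewrite eu ew in Suw; rewrite mem_index_iota in hk0.
  by case/negP: ZPk0; rewrite (side_without_code Z2 Suw) ?P_code //; lia.
apply: (tour_edge_across_agree innerZ Z2 Y2 hk' _ _ Suw Yuw); last by lia.
by move=> m hm; apply: IH; lia.
Qed.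
End ConstantCode.

(** * Adjacency in the pyramidal tours polytope *)

Definition indicator (R : realFieldType) n (A : {set edge n}) : {ffun edge n -> R} :=
  [ffun e => if e \in A then 1%R else 0%R].

Lemma dotE_indicator (R : realFieldType) n (A B : {set edge n}) :
  dotE (indicator R A) (indicator R B) = (#|A :&: B|%:R)%R.
Proof.
rewrite /dotE -sum1_card natr_sum [RHS]big_mkcond /=; apply: eq_bigr => e _.
by rewrite !ffunE inE; case: (e \in A); case: (e \in B); rewrite ?mulr1 ?mulr0.
Qed.

Lemma dotE_tour_le (R : realFieldType) n U L : 2 < n -> inner n L ->
  (dotE (indicator R U) (indicator R (tour n L)) <= n%:R)%R.
Proof.
move=> n2 innerL; rewrite dotE_indicator ler_nat.
by rewrite -[X in _ <= X](card_tour n2 innerL) subset_leq_card ?subsetIr.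
Qed.

Lemma dotE_tour_eq (R : realFieldType) n U L : 2 < n -> inner n L ->
  (dotE (indicator R U) (indicator R (tour n L)) == n%:R)%R = (tour n L \subset U).
Proof.
move=> n2 innerL; rewrite dotE_indicator eqr_nat -[X in _ == X](card_tour n2 innerL).
by rewrite (subset_leqif_cards (subsetIr U _)).2; apply: (sameP eqP setIidPr).
Qed.

Lemma segment_endpoint (R : realFieldType) (T : finType) (p q r : {ffun T -> R}) :
  r = p \/ r = q ->
  exists t : R, [/\ (0 <= t)%R, (t <= 1)%R & r = [ffun e => (1 - t) * p e + t * q e]%R].
Proof.
case=> ->; [exists 0%R | exists 1%R]; rewrite lexx ler01; split=> //; apply/ffunP => e.
  by rewrite ffunE subr0 mul1r mul0r addr0.
by rewrite ffunE subrr mul0r mul1r add0r.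
Qed.

Lemma charvec_pyr (R : realFieldType) n a b : is_pyramidal n a b ->
  charvec R n (pyr_seq n a b) = indicator R (tour n (mem a)).
Proof. by move=> pyr; apply/ffunP => e; rewrite !ffunE inE edge_in_pyr. Qed.

Lemma PT_tour (R : realFieldType) n s : 2 < n -> PT n s ->
  exists L, [/\ inner n L, L 2 & charvec R n s = indicator R (tour n L)].
Proof.
move=> n2 [a [b [-> pyr]]]; have [innera _] := pyramidal_sides pyr.
have chara := charvec_pyr R pyr.
case a2: (2 \in a); first by exists (mem a).
exists (other_side n (mem a)); split; first by move=> k /andP[].
  by rewrite /other_side /= a2 andbT; lia.
by rewrite tour_other.
Qed.

Theorem mainTheorem6 (R : realFieldType) (n : nat) : 4 <= n ->
  forall (bit : bool) (a b : seq nat),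
    is_pyramidal n a b -> 2 \in a -> code_all n a bit ->
    forall y, PYRgen R n y -> y <> charvec R n (pyr_seq n a b) ->
      adjacent R n (PYRgen R n) (charvec R n (pyr_seq n a b)) y.
Proof.
move=> n4 bit a b pyr a2 code _ [s [PTs ->]] neq; have n2 : 2 < n by lia.
have [innerP _] := pyramidal_sides pyr.
have P_code m : 2 < m < n -> (m \in a) = bit by move=> hm; apply: code; lia.
have PYRp : PYRgen R n (charvec R n (pyr_seq n a b)).
  by exists (pyr_seq n a b); split=> //; exists a, b.
have [Y [innerY Y2 charY]] := PT_tour R n2 PTs.
move: neq PYRp; rewrite charvec_pyr // charY => neq PYRp.
pose c := indicator R (tour n (mem a) :|: tour n Y).
have cP : dotE c (indicator R (tour n (mem a))) = n%:R%R.
  by apply/eqP; rewrite dotE_tour_eq ?subsetUl.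
have cY : dotE c (indicator R (tour n Y)) = n%:R%R.
  by apply/eqP; rewrite dotE_tour_eq ?subsetUr.
split; [done | by exists s; rewrite charY | exact: nesym | exists c; split].
- by rewrite cP cY.
- by move=> _ [s' [PTs' ->]]; have [Z [innerZ _ ->]] := PT_tour R n2 PTs'; rewrite cP dotE_tour_le.
move=> _ [s' [PTs' ->]]; have [Z [innerZ Z2 ->]] := PT_tour R n2 PTs'.
rewrite cP => /eqP; rewrite dotE_tour_eq // => ZPY; apply: segment_endpoint.
by case: (tour_in_union_constant_code innerP a2 P_code innerY innerZ Y2 Z2 ZPY)
  => /(eq_tour n) ->; [left | right].
Qed.
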